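(* Consider an iteration of the sig-cGA optimizing $\mathrm{DLB}$ in which the current frequency vector $\tau$ lies in $\{\frac12,1-\frac1n\}^n$. Then for every $i\in[1..n]$, a $1$ is appended to the history $H_i$ in this iteration (i.e., the winner $z$ has $z_i=1$) with probability at least $\tau_i$.
   Context: Let $n$ be an even positive integer. For $x\in\{0,1\}^n$ consider the blocks $(x_{2\ell+1},x_{2\ell+2})$, $\ell=0,\dots,\frac n2-1$. If $x\neq(1,\dots,1)$, let $m$ be the smallest $\ell$ with $x_{2\ell+1}\neq 1$ or $x_{2\ell+2}\neq 1$, and define $\mathrm{DLB}(x)=2m+1$ if $x_{2m+1}+x_{2m+2}=0$ and $\mathrm{DLB}(x)=2m$ if $x_{2m+1}+x_{2m+2}=1$; set $\mathrm{DLB}(1,\dots,1)=n$. In an iteration of the sig-cGA with current frequency vector $\tau$, two individuals $x,y$ are sampled independently, each bit $j$ being $1$ independently with probability $\tau_j$; the winner $z$ is the one with larger $\mathrm{DLB}$-value (chosen uniformly at random in case of a tie); then for each $i$ the bit $z_i$ is appended to the history $H_i$ (after which the frequencies are possibly updated). *)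

From HB Require Import structures.
From mathcomp Require Import all_boot all_order all_algebra.
Set Implicit Arguments. Unset Strict Implicit. Unset Printing Implicit Defensive.
Import Order.TTheory GRing.Theory Num.Theory.
Local Open Scope ring_scope.

(* DLB on a bit string given as a sequence (x_1, x_2, ..., x_n), scanning
   blocks (x_{2l+1}, x_{2l+2}); m counts the number of leading (1,1)-blocks. *)
Fixpoint dlb_aux (m : nat) (s : seq bool) : nat :=
  match s with
  | a :: b :: t =>
      if a && b then dlb_aux m.+1 t
      else if ~~ a && ~~ b then (2 * m).+1
      else (2 * m)%N
  | _ => (2 * m)%N (* all blocks are (1,1): value 2*(n/2) = n for even n *)
  end.

(* x : {0,1}^n, with x (i : 'I_n) being the bit x_{i+1}. *)
Definition DLB (n : nat) (x : {ffun 'I_n -> bool}) : nat :=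
  dlb_aux 0 [seq x i | i <- enum 'I_n].

Definition sample_prob (R : realFieldType) (n : nat) (tau : 'I_n -> R)
    (x : {ffun 'I_n -> bool}) : R :=
  \prod_(j < n) (if x j then tau j else 1 - tau j).

(* Probability that the winner z of the duel between x and y has z_i = 1
   (winner = larger DLB value, uniformly random on ties). *)
Definition winner_bit_prob (R : realFieldType) (n : nat) (i : 'I_n)
    (x y : {ffun 'I_n -> bool}) : R :=
  if (DLB y < DLB x)%N then (x i)%:R
  else if (DLB x < DLB y)%N then (y i)%:R
  else ((x i)%:R + (y i)%:R) / 2.

(* Probability that, in one sig-cGA iteration on DLB with frequency vector tau,
   a 1 is appended to the history H_i. *)
Definition prob_append_one (R : realFieldType) (n : nat) (tau : 'I_n -> R)
    (i : 'I_n) : R :=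
  \sum_(x : {ffun 'I_n -> bool}) \sum_(y : {ffun 'I_n -> bool})
     sample_prob tau x * sample_prob tau y * winner_bit_prob R i x y.

From HB Require Import structures.
From mathcomp Require Import all_boot all_order all_algebra.
From mathcomp Require Import zify ring lra.
Import Order.TTheory GRing.Theory Num.Theory.
Set Implicit Arguments. Unset Strict Implicit. Unset Printing Implicit Defensive.
Local Open Scope ring_scope.

(* Bit i lies in the block (i0, i1) = (2 (i/2), 2 (i/2) + 1).  Resample the two
   bits of this block in both individuals, all other bits fixed.  An individual
   whose bits before the block are not all ones has a DLB value below i0 that
   does not depend on the block; otherwise its value is at least i0 and is
   decided by the block, (1,1) beating (0,0) beating (0,1) and (1,0).  So if at
   most one of the two prefixes is all ones, which individual wins does not
   depend on the block, and the winner's bit i is 1 with probability exactly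
   tau i.  If both are, the duel is played on the block alone and the winner's
   bit i is 1 with probability duel_poly (tau i) (tau j), j the partner of i;
   for frequencies in {1/2, 1 - 1/n} this is at least tau i. *)

Definition bit_weight {R : realFieldType} (p : R) (a : bool) : R :=
  if a then p else 1 - p.

Definition set_bit {n} (x : {ffun 'I_n -> bool}) (k : 'I_n) (a : bool) :
  {ffun 'I_n -> bool} := [ffun j => if j == k then a else x j].

Section SetBit.
Variables (n : nat) (x : {ffun 'I_n -> bool}) (k : 'I_n).

Lemma set_bit_id : set_bit x k (x k) = x.
Proof. by apply/ffunP => j; rewrite ffunE; case: eqP => // ->. Qed.

Lemma set_bit_set_bit a b : set_bit (set_bit x k b) k a = set_bit x k a.
Proof. by apply/ffunP => j; rewrite !ffunE; case: eqP. Qed.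

Lemma set_bit_flip_inj : injective (fun y => set_bit y k (~~ y k)).
Proof.
move=> y z /ffunP eq_yz; apply/ffunP => j.
have := eq_yz k; rewrite !ffunE eqxx => /negb_inj yz_k.
by have := eq_yz j; rewrite !ffunE; case: eqP => [->|].
Qed.

End SetBit.

Lemma exchange_big_weighted (R : realFieldType) (I J : finType)
    (f : I -> R) (g : J -> R) (F : I -> J -> R) :
  \sum_i f i * \sum_j g j * F i j = \sum_j g j * \sum_i f i * F i j.
Proof.
under eq_bigr => i _ do rewrite big_distrr /=.
rewrite exchange_big /=; apply: eq_bigr => j _; rewrite big_distrr /=.
by apply: eq_bigr => i _; rewrite mulrCA.
Qed.

Definition block_expect (R : realFieldType) (p q : R)
    (F : bool -> bool -> bool -> bool -> R) : R :=
  \sum_a bit_weight p a * \sum_b bit_weight q b *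
  \sum_c bit_weight p c * \sum_e bit_weight q e * F a b c e.

Section Resampling.
Variables (R : realFieldType) (n : nat) (tau : 'I_n -> R).
Notation w := (sample_prob tau).

Lemma sum_bit_weight (p : R) : \sum_a bit_weight p a = 1.
Proof. by rewrite big_bool /= addrC subrK. Qed.

Lemma sample_prob_set_bit x k a :
  w (set_bit x k a) = bit_weight (tau k) a * \prod_(j | j != k) bit_weight (tau j) (x j).
Proof.
rewrite /sample_prob (bigD1 k) //= ffunE eqxx; congr (_ * _).
by apply: eq_bigr => j /negbTE nkj; rewrite ffunE nkj.
Qed.

Lemma sum_ffun_set_bit k (H : {ffun 'I_n -> bool} -> R) :
  \sum_x H x = \sum_a \sum_(x : {ffun 'I_n -> bool} | ~~ x k) H (set_bit x k a).
Proof.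
rewrite big_bool [LHS](bigID [pred x : {ffun 'I_n -> bool} | x k]) /=.
congr (_ + _); last first.
  by apply: eq_bigr => x /negbTE xk; rewrite -[in LHS](set_bit_id x k) xk.
rewrite (reindex_inj (@set_bit_flip_inj _ k)) /=.
apply: eq_big => [x|x]; first by rewrite ffunE eqxx.
by rewrite ffunE eqxx => /negbTE ->.
Qed.

Lemma expect_resample k F :
  \sum_x w x * F x = \sum_x w x * \sum_a bit_weight (tau k) a * F (set_bit x k a).
Proof.
pose r (x : {ffun 'I_n -> bool}) := \prod_(j | j != k) bit_weight (tau j) (x j).
pose C := \sum_(x : {ffun 'I_n -> bool} | ~~ x k)
            r x * \sum_a bit_weight (tau k) a * F (set_bit x k a).
rewrite !(sum_ffun_set_bit k (fun x => w x * _)).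
transitivity C.
  rewrite exchange_big /=; apply: eq_bigr => x _; rewrite big_distrr /=.
  by apply: eq_bigr => a _; rewrite sample_prob_set_bit -mulrA mulrCA.
rewrite -[C]mul1r -(sum_bit_weight (tau k)) big_distrl /=.
apply: eq_bigr => b _; rewrite big_distrr /=; apply: eq_bigr => x _.
rewrite sample_prob_set_bit -mulrA; congr (_ * (_ * _)).
by apply: eq_bigr => a _; rewrite set_bit_set_bit.
Qed.

Lemma expect_resample_block k0 k1 F :
  \sum_x w x * F x =
  \sum_x w x * \sum_a bit_weight (tau k0) a * \sum_b bit_weight (tau k1) b *
                F (set_bit (set_bit x k0 a) k1 b).
Proof.
rewrite (expect_resample k1).
by rewrite (expect_resample k0 (fun x => \sum_b bit_weight (tau k1) b * F (set_bit x k1 b))).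
Qed.

Lemma expect2_resample_block k0 k1 (F : {ffun 'I_n -> bool} -> {ffun 'I_n -> bool} -> R) :
  \sum_x \sum_y w x * w y * F x y =
  \sum_x w x * \sum_y w y *
    block_expect (tau k0) (tau k1) (fun a b c e =>
      F (set_bit (set_bit x k0 a) k1 b) (set_bit (set_bit y k0 c) k1 e)).
Proof.
under eq_bigr => x _ do under eq_bigr => y _ do rewrite -mulrA.
under eq_bigr => x _ do rewrite -big_distrr /= (expect_resample_block k0 k1).
rewrite [LHS](expect_resample_block k0 k1); apply: eq_bigr => x _; congr (_ * _).
rewrite /block_expect [RHS]exchange_big_weighted; apply: eq_bigr => a _; congr (_ * _).
by rewrite [RHS]exchange_big_weighted.
Qed.

Lemma sum_sample_prob : \sum_x w x = 1.
Proof.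
rewrite /sample_prob -(bigA_distr_bigA (fun j => bit_weight (tau j))) /=.
by rewrite big1 // => j _; rewrite sum_bit_weight.
Qed.

Hypothesis tau01 : forall j, 0 <= tau j <= 1.

Lemma sample_prob_ge0 x : 0 <= w x.
Proof.
by apply: prodr_ge0 => j _; have /andP[? ?] := tau01 j; case: (x j); lra.
Qed.

Lemma expect_ge (c : R) F : (forall x, c <= F x) -> c <= \sum_x w x * F x.
Proof.
move=> c_le; rewrite -[c]mul1r -sum_sample_prob big_distrl /=.
by apply: ler_sum => x _; rewrite ler_wpM2l ?sample_prob_ge0.
Qed.

End Resampling.

(* The DLB value of [1, ..., 1, a, b, suffix] with A ones (A even), when the
   suffix alone has DLB value t. *)
Definition block_dlb (A t : nat) (a b : bool) : nat :=
  if a && b then (A.+2 + t)%N else if ~~ a && ~~ b then A.+1 else A.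

Lemma dlb_aux_shift m s : dlb_aux m s = (2 * m + dlb_aux 0 s)%N.
Proof.
have [k] := ubnP (size s); elim: k s m => // k IH [|a [|b t]] m /= size_lt; try lia.
case: (a && b); last by case: (~~ a && ~~ b); lia.
by rewrite (IH t m.+1) ?(IH t 1) //; lia.
Qed.

Lemma dlb_aux_block m a b t :
  dlb_aux m [:: a, b & t] = block_dlb (2 * m) (dlb_aux 0 t) a b.
Proof. by rewrite /= /block_dlb; case: (a && b) => //; rewrite dlb_aux_shift; lia. Qed.

Lemma dlb_aux_lt m s : ~~ all id s -> (dlb_aux m s < 2 * m + size s)%N.
Proof.
have [k] := ubnP (size s); elim: k s m => // k IH [|a [|b t]] m //= size_lt.
  by case: a; lia.
case: ifP => [/andP[-> ->] /= not_all|_ _]; first by have := IH t m.+1; lia.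
by case: ifP; lia.
Qed.

Lemma dlb_aux_cat m s t : ~~ odd (size s) ->
  dlb_aux m (s ++ t) = if all id s then dlb_aux (m + (size s)./2) t else dlb_aux m s.
Proof.
have [k] := ubnP (size s); elim: k s m => // k IH [|a [|b s]] m //= size_lt.
- by rewrite addn0.
- rewrite !negbK => even_s.
  by case: a b => [] [] //=; rewrite (IH s m.+1) ?addSnnS //; lia.
Qed.

Definition bits n (x : {ffun 'I_n -> bool}) : seq bool := [seq x j | j <- enum 'I_n].

Lemma size_bits n (x : {ffun 'I_n -> bool}) : size (bits x) = n.
Proof. by rewrite size_map size_enum_ord. Qed.

Lemma nth_bits n (x : {ffun 'I_n -> bool}) (j : 'I_n) : nth false (bits x) j = x j.
Proof. by rewrite (nth_map j) ?size_enum_ord // nth_ord_enum. Qed.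

Lemma bits_set_bit n (x : {ffun 'I_n -> bool}) k a :
  bits (set_bit x k a) = set_nth false (bits x) k a.
Proof.
apply: (@eq_from_nth _ false).
  by rewrite size_set_nth !size_bits (maxn_idPr (ltn_ord k)).
move=> j; rewrite size_bits => lt_jn; have -> : j = Ordinal lt_jn by [].
rewrite nth_bits ffunE; set s := bits x.
by rewrite nth_set_nth /= /s (nth_bits x (Ordinal lt_jn)).
Qed.

Lemma set_nth_pair (T : Type) (x0 : T) s k a b : (k.+1 < size s)%N ->
  set_nth x0 (set_nth x0 s k a) k.+1 b = take k s ++ [:: a, b & drop k.+2 s].
Proof.
move=> lt_k1s; have lt_ks := ltnW lt_k1s.
have size_take : size (take k s) = k by rewrite size_takel // ltnW.
have size_set : size (take k s ++ a :: drop k.+1 s) = size s.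
  by rewrite size_cat /= size_drop size_take; lia.
rewrite (set_nthE _ _ k) lt_ks set_nthE size_set lt_k1s take_cat drop_cat size_take.
have [-> ->] : (k.+1 < k)%N = false /\ (k.+2 < k)%N = false by lia.
have [-> ->] : (k.+1 - k = 1)%N /\ (k.+2 - k = 2)%N by lia.
by rewrite /= drop_drop take0 -catA.
Qed.

Lemma DLB_set_block n (x : {ffun 'I_n -> bool}) (k0 k1 : 'I_n) a b :
  val k1 = (val k0).+1 -> ~~ odd k0 ->
  DLB (set_bit (set_bit x k0 a) k1 b) =
  if all id (take k0 (bits x)) then block_dlb k0 (dlb_aux 0 (drop k0.+2 (bits x))) a b
  else dlb_aux 0 (take k0 (bits x)).
Proof.
move=> k1E k0_even.
have size_take : size (take k0 (bits x)) = k0 by rewrite size_takel // size_bits ltnW.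
have half_k0 : (2 * k0./2)%N = k0 by rewrite mul2n halfK (negbTE k0_even) subn0.
rewrite /DLB -/(bits _) !bits_set_bit k1E.
rewrite set_nth_pair; last by rewrite size_bits -k1E ltn_ord.
by rewrite dlb_aux_cat size_take // dlb_aux_block add0n half_k0.
Qed.

Definition winner_bit (R : realFieldType) (d d' : nat) (u v : bool) : R :=
  if (d' < d)%N then u%:R else if (d < d')%N then v%:R else (u%:R + v%:R) / 2.

(* Some (1,1) block occurs, or a (1,0) block meets (1,0) or (0,1). *)
Definition duel_poly (R : realFieldType) (p q : R) : R :=
  2 * p * q - (p * q) ^+ 2 + p * (1 - q) * (p * (1 - q) + q * (1 - p)).

Lemma winner_bit_gt (R : realFieldType) d d' u v :
  (d' < d)%N -> winner_bit R d d' u v = u%:R.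
Proof. by rewrite /winner_bit => ->. Qed.

Lemma winner_bit_lt (R : realFieldType) d d' u v :
  (d < d')%N -> winner_bit R d d' u v = v%:R.
Proof. by rewrite /winner_bit => lt_dd'; rewrite lt_dd' ltnNge ltnW. Qed.

Lemma leq_block_dlb A t a b : (A <= block_dlb A t a b)%N.
Proof. by rewrite /block_dlb; case: ifP => _; [|case: ifP => _]; lia. Qed.

Lemma duel_poly_ge (R : realFieldType) (t p q : R) : 2^-1 <= t <= 1 ->
  (p = 2^-1 \/ p = t) -> (q = 2^-1 \/ q = t) -> p <= duel_poly p q.
Proof.
move=> /andP[t_ge t_le] p_freq q_freq.
(* duel_poly p q - p is 1/16, t(1-t)/4, (3t-t^2-1)/4 or t(1-t)(3t-t^2-1). *)
have t_var : 0 <= t * (1 - t) by apply: mulr_ge0; lra.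
have t_quad : 0 <= 3 * t - t ^+ 2 - 1.
  by have := mulr_ge0 (_ : 0 <= t - 2^-1) (_ : 0 <= 1 - t); rewrite expr2; lra.
have := mulr_ge0 t_var t_quad; rewrite /duel_poly.
by case: p_freq => ->; case: q_freq => ->; rewrite !expr2 => ?; nra.
Qed.

Section BlockDuel.
Variables (R : realFieldType) (p q : R) (sel : bool).
Let pick (T : Type) (u v : T) := if sel then u else v.

Lemma eq_block_expect (F G : bool -> bool -> bool -> bool -> R) :
  (forall a b c e, F a b c e = G a b c e) -> block_expect p q F = block_expect p q G.
Proof.
move=> eqFG; apply: eq_bigr => a _; congr (_ * _); apply: eq_bigr => b _; congr (_ * _).
by apply: eq_bigr => c _; congr (_ * _); apply: eq_bigr => e _; rewrite eqFG.
Qed.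

Lemma block_expect_fst : block_expect p q (fun a b _ _ => (pick a b)%:R) = pick p q.
Proof. by rewrite /block_expect !big_bool /pick /bit_weight; case: sel => /=; field. Qed.

Lemma block_expect_snd : block_expect p q (fun _ _ c e => (pick c e)%:R) = pick p q.
Proof. by rewrite /block_expect !big_bool /pick /bit_weight; case: sel => /=; field. Qed.

Lemma block_expect_winner_const dx dy :
  block_expect p q (fun a b c e => winner_bit R dx dy (pick a b) (pick c e)) = pick p q.
Proof.
rewrite /block_expect /winner_bit !big_bool /pick /bit_weight.
by case: (dy < dx)%N; case: (dx < dy)%N; case: sel => /=; field.
Qed.

Lemma block_expect_winner_dlb0 :
  block_expect p q (fun a b c e =>
    winner_bit R (block_dlb 0 0 a b) (block_dlb 0 0 c e) (pick a b) (pick c e)) =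
  pick (duel_poly p q) (duel_poly q p).
Proof.
rewrite /block_expect !big_bool /pick /bit_weight /duel_poly /winner_bit /block_dlb.
by case: sel => /=; field.
Qed.

Lemma winner_bit_block_dlb A tx ty a b c e :
  winner_bit R (block_dlb A tx a b) (block_dlb A ty c e) (pick a b) (pick c e) =
  winner_bit R (block_dlb 0 0 a b) (block_dlb 0 0 c e) (pick a b) (pick c e).
Proof.
(* Two (1,1) blocks are compared through their suffixes, but then both
   candidate bits are 1 anyway. *)
have one_one : (1 + 1) / 2 = 1 :> R by field.
rewrite /winner_bit /block_dlb /pick.
by case: a b c e sel => [] [] [] [] [] /=; rewrite ?one_one; do ![case: ifP => //]; lia.
Qed.

Lemma block_duel_ge (t : R) A (Px Py : bool) dx dy tx ty :
  2^-1 <= t <= 1 -> (p = 2^-1 \/ p = t) -> (q = 2^-1 \/ q = t) ->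
  (~~ Px -> dx < A)%N -> (~~ Py -> dy < A)%N ->
  pick p q <= block_expect p q (fun a b c e =>
    winner_bit R (if Px then block_dlb A tx a b else dx)
                 (if Py then block_dlb A ty c e else dy) (pick a b) (pick c e)).
Proof.
move=> t_range p_freq q_freq.
case: Px Py => [] [] dx_lt dy_lt.
- under eq_block_expect => a b c e do rewrite winner_bit_block_dlb.
  by rewrite block_expect_winner_dlb0 /pick; case: sel; apply: duel_poly_ge t_range _ _.
- under eq_block_expect => a b c e do
    rewrite winner_bit_gt ?(leq_trans (dy_lt isT) (leq_block_dlb _ _ _ _)) //.
  by rewrite block_expect_fst.
- under eq_block_expect => a b c e do
    rewrite winner_bit_lt ?(leq_trans (dx_lt isT) (leq_block_dlb _ _ _ _)) //.
  by rewrite block_expect_snd.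
- by rewrite block_expect_winner_const.
Qed.

End BlockDuel.

Lemma winner_bit_probE (R : realFieldType) n (i : 'I_n) x y :
  winner_bit_prob R i x y = winner_bit R (DLB x) (DLB y) (x i) (y i).
Proof. by []. Qed.

Lemma one_sub_inv_range (R : realFieldType) n : (2 <= n)%N ->
  (2^-1 : R) <= 1 - (n%:R : R)^-1 <= 1.
Proof.
move=> n_ge2; have inv_ge0 : 0 <= n%:R^-1 :> R by rewrite invr_ge0.
have : n%:R^-1 <= 2^-1 :> R by rewrite lef_pV2 ?posrE ?ltr0n ?ler_nat //; lia.
by move=> inv_le; apply/andP; split; lra.
Qed.

Section FrequencyBound.
Variables (R : realFieldType) (n : nat) (tau : 'I_n -> R) (t : R).
Hypothesis t_range : 2^-1 <= t <= 1.
Hypothesis tau_freq : forall j, tau j = 2^-1 \/ tau j = t.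
Hypothesis n_even : ~~ odd n.
Variable i : 'I_n.

Lemma block_end_lt : ((i./2).*2.+1 < n)%N.
Proof.
have := ltn_ord i; have := odd_double_half i; have := odd_double_half n.
by rewrite (negbTE n_even); lia.
Qed.

Let i0 : 'I_n := Ordinal (ltnW block_end_lt).
Let i1 : 'I_n := Ordinal block_end_lt.

Lemma set_block_at x a b : set_bit (set_bit x i0 a) i1 b i = if ~~ odd i then a else b.
Proof.
rewrite !ffunE -!(inj_eq val_inj) /=; have := odd_double_half i.
by case: (odd i) => /= iE; do 2?[case: eqP => ? //]; lia.
Qed.

Lemma tau_at_block : tau i = if ~~ odd i then tau i0 else tau i1.
Proof.
by have := odd_double_half i; case: (odd i) => /= iE; congr tau; apply: val_inj.
Qed.

Lemma freq_le_prob_append_one : tau i <= prob_append_one tau i.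
Proof.
have tau01 j : 0 <= tau j <= 1.
  by have /andP[? ?] := t_range; case: (tau_freq j) => ->; apply/andP; split; lra.
have prefix_lt (x : {ffun 'I_n -> bool}) :
    ~~ all id (take i0 (bits x)) -> (dlb_aux 0 (take i0 (bits x)) < i0)%N.
  by move=> /(dlb_aux_lt 0); rewrite size_takel // size_bits ltnW.
have i1E : val i1 = (val i0).+1 by [].
have i0_even : ~~ odd i0 by rewrite /= odd_double.
rewrite /prob_append_one (expect2_resample_block tau i0 i1) tau_at_block.
apply: (expect_ge tau01) => x; apply: (expect_ge tau01) => y.
under eq_block_expect => a b c e do
  rewrite winner_bit_probE !DLB_set_block // !set_block_at.
exact: block_duel_ge t_range (tau_freq i0) (tau_freq i1) (prefix_lt x) (prefix_lt y).
Qed.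

End FrequencyBound.

Unset Implicit Arguments.

Theorem corollary22 (R : realFieldType) (n : nat) (tau : 'I_n -> R) :
  (0 < n)%N -> ~~ odd n ->
  (forall j : 'I_n, tau j = 2^-1 \/ tau j = 1 - (n%:R)^-1) ->
  forall i : 'I_n, tau i <= prob_append_one tau i.
Proof.
move=> n_gt0 n_even tau_freq i.
have n_ge2 : (2 <= n)%N by move: n_gt0 n_even; case: n {tau tau_freq i} => [|[]].
exact: freq_le_prob_append_one (one_sub_inv_range R n_ge2) tau_freq n_even i.
Qed.
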